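(* Let $(\beta_n)_{n\ge1}$ be positive reals bounded away from $0$ and $+\infty$, and let $A_n$ satisfy (C1) and $\liminf_{n\to\infty}\frac1n\sum_{i,j=1}^nA_n(i,j)^2>0$. Then for every $B\in\mathbb R$ there exists $\delta>0$ such that $$\limsup_{n\to\infty}\frac1n\log\mathbb P^{\mathrm{cw}}_{n,\beta_n,B}\Big(\sum_{i=1}^n\big(m_i(\mathbf X)-\bar m(\mathbf X)\big)^2\le n\delta\Big)<0.$$
   Context: For each $n$, $A_n$ is a symmetric $n\times n$ matrix with non-negative entries and zero diagonal; (C1): there is a constant $\gamma<\infty$ with $\max_{i}\sum_{j}A_n(i,j)\le\gamma$ for all $n$. $\mathbb P^{\mathrm{cw}}_{n,\beta,B}$ is the Curie–Weiss model on $\{-1,1\}^n$: $\mathbb P^{\mathrm{cw}}_{n,\beta,B}(\mathbf X=\mathbf x)\propto\exp\big(\frac{\beta}{2n}(\sum_{i=1}^nx_i)^2+B\sum_{i=1}^nx_i\big)$. Here $m(\mathbf x)=A_n\mathbf x$, i.e. $m_i(\mathbf x)=\sum_jA_n(i,j)x_j$, and $\bar m(\mathbf x)=\frac1n\sum_im_i(\mathbf x)$ (the Curie–Weiss law does not depend on $A_n$; $A_n$ enters only through $m$). *)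

From Stdlib Require Import Reals List Arith.
Import ListNotations.
Open Scope R_scope.

Definition rsum (n : nat) (f : nat -> R) : R :=
  fold_right Rplus 0 (map f (seq 0 n)).

(* All configurations x in {-1,1}^n, as lists of length n; x_i = nth i x 0. *)
Fixpoint configs (n : nat) : list (list R) :=
  match n with
  | O => [ [] ]
  | S k => flat_map (fun l => [1 :: l; (-1) :: l]) (configs k)
  end.

Definition spin (x : list R) (i : nat) : R := nth i x 0.

Definition magn (n : nat) (x : list R) : R := rsum n (spin x).

Definition cw_weight (n : nat) (beta B : R) (x : list R) : R :=
  exp (beta / (2 * INR n) * (magn n x) ^ 2 + B * magn n x).

Definition cw_prob (n : nat) (beta B : R) (E : list R -> Prop)
  (Edec : forall x, {E x} + {~ E x}) : R :=
  fold_right Rplus 0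
    (map (fun x => if Edec x then cw_weight n beta B x else 0) (configs n))
  / fold_right Rplus 0 (map (cw_weight n beta B) (configs n)).

Definition m_i (n : nat) (A : nat -> nat -> R) (x : list R) (i : nat) : R :=
  rsum n (fun j => A i j * spin x j).

Definition m_bar (n : nat) (A : nat -> nat -> R) (x : list R) : R :=
  / INR n * rsum n (m_i n A x).

Definition m_var (n : nat) (A : nat -> nat -> R) (x : list R) : R :=
  rsum n (fun i => (m_i n A x i - m_bar n A x) ^ 2).

(* Call a pair (i, j) heavy when A_ij >= tau, with tau = c / (2 gamma).  Since the entries are
   at most gamma and sum to order n squared, there are order n heavy pairs, and a locally
   maximal choice keeps order n of them that are vertex-disjoint and almost decoupled: for a
   selected pair, the spins at the second endpoints of the other selected pairs shift
   m_i - m_j by at most tau / 4 in total.  A selected pair is good at x when the remaining part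
   of m_i - m_j has size at least tau; every good pair contributes order tau^2 to
   sum_i (m_i - mbar)^2, so a small variance forces few good pairs.  Flipping x_j turns a bad
   selected pair (i, j) into a good one without affecting the other selected pairs, at the cost
   of a bounded factor in the Curie-Weiss weight.  Counting (configuration, repairable pair)
   couples in two ways then halves the mass of the sublevel sets of the number of good pairs
   at each of order n steps, so small variance has exponentially small probability. *)

From Stdlib Require Import Reals List Arith Lra Lia Psatz Classical.
Import ListNotations.
Open Scope R_scope.

Definition lsum {T : Type} (l : list T) (f : T -> R) : R := fold_right Rplus 0 (map f l).

Section ListSums.
Context {T : Type}.
Implicit Types (l : list T) (f g : T -> R).

Lemma lsum_app l1 l2 f : lsum (l1 ++ l2) f = lsum l1 f + lsum l2 f.
Proof. induction l1 as [|a l1 IH]; unfold lsum in *; simpl; [ring | rewrite IH; ring]. Qed.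

Lemma lsum_ext l f g : (forall x, In x l -> f x = g x) -> lsum l f = lsum l g.
Proof.
  induction l as [|a l IH]; intros H; unfold lsum in *; simpl; [reflexivity|].
  rewrite H, IH; auto with datatypes.
Qed.

Lemma lsum_le l f g : (forall x, In x l -> f x <= g x) -> lsum l f <= lsum l g.
Proof.
  induction l as [|a l IH]; intros H; unfold lsum in *; simpl; [lra|].
  apply Rplus_le_compat; auto with datatypes.
Qed.

Lemma lsum_scal l c f : lsum l (fun x => c * f x) = c * lsum l f.
Proof. induction l as [|a l IH]; unfold lsum in *; simpl; [ring | rewrite IH; ring]. Qed.

Lemma lsum_nonneg l f : (forall x, In x l -> 0 <= f x) -> 0 <= lsum l f.
Proof.
  induction l as [|a l IH]; intros H; unfold lsum in *; simpl; [lra|].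
  apply Rplus_le_le_0_compat; auto with datatypes.
Qed.

Lemma lsum_pos l f x0 :
  In x0 l -> (forall x, In x l -> 0 <= f x) -> 0 < f x0 -> 0 < lsum l f.
Proof.
  induction l as [|a l IH]; intros Hx0 H Hpos; [destruct Hx0|]; unfold lsum in *; simpl.
  destruct Hx0 as [<-|Hx0].
  - assert (0 <= fold_right Rplus 0 (map f l)) by (apply lsum_nonneg; auto with datatypes). lra.
  - assert (0 <= f a) by auto with datatypes.
    assert (0 < fold_right Rplus 0 (map f l)) by (apply IH; auto with datatypes). lra.
Qed.

Lemma list_argmax l (F : T -> R) x0 :
  In x0 l -> exists x, In x l /\ forall y, In y l -> F y <= F x.
Proof.
  revert x0; induction l as [|a l IH]; intros x0 Hx0; [destruct Hx0|].
  destruct l as [|a' l'].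
  - exists a; split; [left; reflexivity|]. intros y [<-|[]]; lra.
  - destruct (IH a' (or_introl eq_refl)) as [x [Hx Hmax]].
    destruct (Rle_dec (F a) (F x)).
    + exists x; split; [right; exact Hx|]. intros y [<-|Hy]; auto.
    + exists a; split; [left; reflexivity|]. intros y [<-|Hy]; [lra|].
      specialize (Hmax y Hy); lra.
Qed.

End ListSums.

Section RangeSums.
Implicit Types (f g : nat -> R).

Lemma rsum_0 f : rsum 0 f = 0.
Proof. reflexivity. Qed.

Lemma rsum_S n f : rsum (S n) f = rsum n f + f n.
Proof.
  change (lsum (seq 0 (S n)) f = lsum (seq 0 n) f + f n).
  rewrite seq_S, lsum_app. unfold lsum; simpl. ring.
Qed.

Lemma rsum_ext n f g : (forall k, (k < n)%nat -> f k = g k) -> rsum n f = rsum n g.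
Proof. induction n as [|n IH]; intros H; [reflexivity|]. rewrite !rsum_S, IH, H; auto. Qed.

Lemma rsum_le n f g : (forall k, (k < n)%nat -> f k <= g k) -> rsum n f <= rsum n g.
Proof.
  induction n as [|n IH]; intros H; [rewrite !rsum_0; lra|].
  rewrite !rsum_S. apply Rplus_le_compat; auto.
Qed.

Lemma rsum_plus n f g : rsum n (fun k => f k + g k) = rsum n f + rsum n g.
Proof. induction n as [|n IH]; [rewrite ?rsum_0; simpl; ring|]. rewrite !rsum_S, IH; ring. Qed.

Lemma rsum_minus n f g : rsum n (fun k => f k - g k) = rsum n f - rsum n g.
Proof. induction n as [|n IH]; [rewrite ?rsum_0; simpl; ring|]. rewrite !rsum_S, IH; ring. Qed.

Lemma rsum_scal n c f : rsum n (fun k => c * f k) = c * rsum n f.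
Proof. induction n as [|n IH]; [rewrite ?rsum_0; simpl; ring|]. rewrite !rsum_S, IH; ring. Qed.

Lemma rsum_const n c : rsum n (fun _ => c) = INR n * c.
Proof. induction n as [|n IH]; [rewrite ?rsum_0; simpl; ring|]. rewrite rsum_S, IH, S_INR; ring. Qed.

Lemma rsum_zero n f : (forall k, (k < n)%nat -> f k = 0) -> rsum n f = 0.
Proof. intros H. rewrite (rsum_ext n f (fun _ => 0)), rsum_const by auto. ring. Qed.

Lemma rsum_nonneg n f : (forall k, (k < n)%nat -> 0 <= f k) -> 0 <= rsum n f.
Proof.
  intros H. replace 0 with (rsum n (fun _ => 0)) by (rewrite rsum_const; ring).
  apply rsum_le; auto.
Qed.

Lemma rsum_term_le n f k :
  (forall k, (k < n)%nat -> 0 <= f k) -> (k < n)%nat -> f k <= rsum n f.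
Proof.
  induction n as [|n IH]; intros H Hk; [lia|]. rewrite rsum_S.
  destruct (Nat.eq_dec k n) as [->|Hne].
  - assert (0 <= rsum n f) by (apply rsum_nonneg; auto). lra.
  - assert (f k <= rsum n f) by (apply IH; auto; lia). assert (0 <= f n) by auto. lra.
Qed.

Lemma rsum_single n f k :
  (k < n)%nat -> (forall i, (i < n)%nat -> i <> k -> f i = 0) -> rsum n f = f k.
Proof.
  induction n as [|n IH]; intros Hk H; [lia|]. rewrite rsum_S.
  destruct (Nat.eq_dec k n) as [->|Hne].
  - rewrite (rsum_zero n f) by (intros i Hi; apply H; lia). ring.
  - rewrite IH, (H n); [ring | lia | lia | lia | intros i Hi; apply H; lia].
Qed.

Definition kron (i k : nat) : R := if Nat.eq_dec i k then 1 else 0.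

Lemma rsum_kron n f k : (k < n)%nat -> rsum n (fun i => kron i k * f i) = f k.
Proof.
  intros Hk. rewrite (rsum_single n _ k Hk); unfold kron.
  - destruct (Nat.eq_dec k k); [ring | congruence].
  - intros i _ Hi. destruct (Nat.eq_dec i k); [congruence | ring].
Qed.

Lemma rsum_incr_at n f0 f1 t :
  (t < n)%nat -> f0 t = 0 -> f1 t = 1 ->
  (forall u, (u < n)%nat -> u <> t -> f1 u = f0 u) -> rsum n f1 = rsum n f0 + 1.
Proof.
  intros Ht H0 H1 H.
  rewrite (rsum_ext n f1 (fun u => f0 u + kron u t * 1)), rsum_plus, rsum_kron; auto.
  intros u Hu. unfold kron. destruct (Nat.eq_dec u t) as [->|]; [rewrite H0, H1 | rewrite H]; auto; ring.
Qed.

Lemma rsum_swap n m (f : nat -> nat -> R) :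
  rsum n (fun i => rsum m (fun j => f i j)) = rsum m (fun j => rsum n (fun i => f i j)).
Proof.
  induction n as [|n IH].
  - rewrite rsum_0, (rsum_ext m _ (fun _ => 0)) by reflexivity. rewrite rsum_const; ring.
  - rewrite rsum_S, IH, <- rsum_plus. apply rsum_ext; intros; rewrite rsum_S; ring.
Qed.

Lemma Rabs_rsum_le n f : Rabs (rsum n f) <= rsum n (fun k => Rabs (f k)).
Proof.
  induction n as [|n IH]; [rewrite !rsum_0, Rabs_R0; lra|]. rewrite !rsum_S.
  eapply Rle_trans; [apply Rabs_triang | lra].
Qed.

Lemma lsum_rsum_swap {T : Type} (l : list T) n (f : T -> nat -> R) :
  lsum l (fun x => rsum n (f x)) = rsum n (fun u => lsum l (fun x => f x u)).
Proof.
  induction l as [|a l IH]; unfold lsum in *; simpl.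
  - rewrite rsum_const; ring.
  - rewrite IH, <- rsum_plus. reflexivity.
Qed.

End RangeSums.

Fixpoint flip (p : nat) (x : list R) {struct x} : list R :=
  match x with
  | [] => []
  | a :: l => match p with O => - a :: l | S q => a :: flip q l end
  end.

Lemma spin_flip p x q :
  spin (flip p x) q = if Nat.eq_dec q p then - spin x q else spin x q.
Proof.
  unfold spin. revert p q.
  induction x as [|a x IH]; intros p q; simpl.
  - destruct (Nat.eq_dec q p); destruct q; simpl; ring.
  - destruct p, q; simpl; [reflexivity | reflexivity | reflexivity |].
    rewrite IH. destruct (Nat.eq_dec q p), (Nat.eq_dec (S q) (S p)); auto; lia.
Qed.

Lemma flip_involutive p x : flip p (flip p x) = x.
Proof.
  revert p; induction x as [|a x IH]; intros p; [reflexivity|].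
  destruct p; simpl; [rewrite Ropp_involutive | rewrite IH]; reflexivity.
Qed.

Lemma in_configs n x :
  In x (configs n) -> length x = n /\ (forall a, In a x -> a = 1 \/ a = -1).
Proof.
  revert x; induction n as [|n IH]; intros x Hx; simpl in Hx.
  - destruct Hx as [<-|[]]. split; [reflexivity | intros a []].
  - apply in_flat_map in Hx as [l [Hl Hx]]. destruct (IH l Hl) as [Hlen Hl'].
    destruct Hx as [<-|[<-|[]]]; simpl; split; auto; intros a [<-|Ha]; auto.
Qed.

Lemma spin_configs n x i :
  In x (configs n) -> (i < n)%nat -> spin x i = 1 \/ spin x i = -1.
Proof.
  intros Hx Hi. destruct (in_configs n x Hx) as [Hlen Hx'].
  apply Hx', nth_In. lia.
Qed.

Lemma Rabs_spin_le1 n x i : In x (configs n) -> Rabs (spin x i) <= 1.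
Proof.
  intros Hx. destruct (Nat.lt_ge_cases i n) as [Hi|Hi].
  - destruct (spin_configs n x i Hx Hi) as [-> | ->]; apply Rabs_le; lra.
  - destruct (in_configs n x Hx) as [Hlen _]. unfold spin.
    rewrite nth_overflow by lia. rewrite Rabs_R0; lra.
Qed.

Lemma configs_nonempty n : exists x, In x (configs n).
Proof.
  induction n as [|n [x Hx]]; [exists []; left; reflexivity|].
  exists (1 :: x). apply in_flat_map. exists x. split; [exact Hx | left; reflexivity].
Qed.

Lemma flip_configs n p x : In x (configs n) -> In (flip p x) (configs n).
Proof.
  revert p x; induction n as [|n IH]; intros p x Hx; simpl in *.
  - destruct Hx as [<-|[]]. left; reflexivity.
  - apply in_flat_map in Hx as [l [Hl Hx]]. apply in_flat_map.
    destruct Hx as [<-|[<-|[]]]; destruct p; simpl.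
    + exists l. split; [exact Hl | right; left; reflexivity].
    + exists (flip p l). split; [apply IH, Hl | left; reflexivity].
    + exists l. split; [exact Hl | left; f_equal; ring].
    + exists (flip p l). split; [apply IH, Hl | right; left; reflexivity].
Qed.

Lemma lsum_configs_flip n p (f : list R -> R) :
  lsum (configs n) (fun x => f (flip p x)) = lsum (configs n) f.
Proof.
  assert (Hsplit : forall (L : list (list R)) (h : list R -> R),
    lsum (flat_map (fun l => [1 :: l; -1 :: l]) L) h =
    lsum L (fun l => h (1 :: l) + h (-1 :: l))).
  { induction L as [|a L IH]; intros h; unfold lsum in *; simpl; [reflexivity|].
    rewrite IH. ring. }
  revert p f; induction n as [|n IH]; intros p f.
  - destruct p; reflexivity.
  - simpl. rewrite !Hsplit. destruct p; simpl.
    + apply lsum_ext. intros l _. replace (- (1)) with (-1) by ring. replace (- -1) with 1 by ring. ring.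
    + apply (IH p (fun l => f (1 :: l) + f (-1 :: l))).
Qed.

Lemma rsum_mul_spin_flip n (c : nat -> R) x p : (p < n)%nat ->
  rsum n (fun q => c q * spin (flip p x) q) = rsum n (fun q => c q * spin x q) - 2 * c p * spin x p.
Proof.
  intros Hp.
  rewrite (rsum_ext n _ (fun q => c q * spin x q + kron q p * (- 2 * c q * spin x q))).
  - rewrite rsum_plus, rsum_kron by exact Hp. ring.
  - intros q _. rewrite spin_flip. unfold kron. destruct (Nat.eq_dec q p); ring.
Qed.

(* Ordered pairs (i, j) in [0, n)^2 are encoded as t = i * n + j. *)
Definition pfst (n t : nat) : nat := (t / n)%nat.
Definition psnd (n t : nat) : nat := (t mod n)%nat.

Lemma pair_lt n t : (t < n * n)%nat -> (pfst n t < n)%nat /\ (psnd n t < n)%nat.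
Proof.
  intros Ht. assert (n <> 0%nat) by (intros ->; simpl in Ht; lia). unfold pfst, psnd.
  split; [apply Nat.Div0.div_lt_upper_bound; lia | apply Nat.mod_upper_bound; auto].
Qed.

Lemma rsum_pairs n (g : nat -> nat -> R) :
  rsum (n * n) (fun t => g (pfst n t) (psnd n t)) = rsum n (fun i => rsum n (fun j => g i j)).
Proof.
  assert (Hshift : forall a m (f : nat -> R),
    rsum (a + m) f = rsum a f + rsum m (fun k => f (a + k)%nat)).
  { intros a m f. induction m as [|m IH].
    - rewrite Nat.add_0_r, rsum_0. ring.
    - rewrite Nat.add_succ_r, !rsum_S, IH. ring. }
  enough (H : forall a, rsum (a * n) (fun t => g (pfst n t) (psnd n t)) =
                       rsum a (fun i => rsum n (fun j => g i j))) by apply H.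
  induction a as [|a IH]; [reflexivity|].
  replace (S a * n)%nat with (a * n + n)%nat by lia.
  rewrite Hshift, rsum_S, IH. f_equal. apply rsum_ext. intros k Hk. unfold pfst, psnd.
  replace (a * n + k)%nat with (k + a * n)%nat by lia.
  rewrite Nat.div_add, Nat.Div0.mod_add, Nat.div_small, Nat.mod_small by lia. reflexivity.
Qed.

Section HeavyPairs.

Variables (n : nat) (A : nat -> nat -> R) (gamma tau : R).
Hypothesis tau_pos : 0 < tau.
Hypothesis A_sym : forall i j, (i < n)%nat -> (j < n)%nat -> A i j = A j i.
Hypothesis A_nonneg : forall i j, (i < n)%nat -> (j < n)%nat -> 0 <= A i j.
Hypothesis A_row : forall i, (i < n)%nat -> rsum n (fun j => A i j) <= gamma.

Definition heavy (t : nat) : R := if Rle_dec tau (A (pfst n t) (psnd n t)) then 1 else 0.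

(* Influence of the spin at the second endpoint of [u] on [m] at the two endpoints of [t]. *)
Definition link (t u : nat) : R := A (pfst n t) (psnd n u) + A (psnd n t) (psnd n u).

Definition coupling (t u : nat) : R := link t u + link u t.

Definition interference (b : nat -> R) (t : nat) : R :=
  rsum (n * n) (fun u => if Nat.eq_dec u t then 0 else b u * coupling t u).

Lemma link_nonneg t u : (t < n * n)%nat -> (u < n * n)%nat -> 0 <= link t u.
Proof.
  intros Ht Hu. destruct (pair_lt n t Ht), (pair_lt n u Hu). unfold link.
  apply Rplus_le_le_0_compat; auto.
Qed.

Lemma coupling_nonneg t u : (t < n * n)%nat -> (u < n * n)%nat -> 0 <= coupling t u.
Proof.
  intros Ht Hu. unfold coupling.
  pose proof (link_nonneg t u Ht Hu). pose proof (link_nonneg u t Hu Ht). lra.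
Qed.

Lemma entry_le_gamma i j : (i < n)%nat -> (j < n)%nat -> A i j <= gamma.
Proof. intros Hi Hj. eapply Rle_trans; [apply (rsum_term_le n (fun j => A i j)); auto | auto]. Qed.

Lemma sum_sq_le_heavy :
  rsum n (fun i => rsum n (fun j => A i j ^ 2)) <=
  gamma ^ 2 * rsum (n * n) heavy + tau * gamma * INR n.
Proof.
  change (rsum (n * n) heavy) with
    (rsum (n * n) (fun t => (fun i j => if Rle_dec tau (A i j) then 1 else 0) (pfst n t) (psnd n t))).
  rewrite rsum_pairs, <- rsum_scal.
  replace (tau * gamma * INR n) with (rsum n (fun _ => tau * gamma)) by (rewrite rsum_const; ring).
  rewrite <- rsum_plus. apply rsum_le. intros i Hi.
  apply Rle_trans with
    (rsum n (fun j => gamma ^ 2 * (if Rle_dec tau (A i j) then 1 else 0) + tau * A i j)).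
  - apply rsum_le. intros j Hj.
    pose proof (A_nonneg i j Hi Hj). pose proof (entry_le_gamma i j Hi Hj).
    destruct (Rle_dec tau (A i j)) as [Hh|Hh]; simpl; [|apply Rnot_le_lt in Hh]; nra.
  - rewrite rsum_plus, !rsum_scal.
    apply Rplus_le_compat_l, Rmult_le_compat_l; [lra | exact (A_row i Hi)].
Qed.

Lemma gamma_nonneg : (0 < n)%nat -> 0 <= gamma.
Proof.
  intros Hn. eapply Rle_trans; [|apply (A_row 0%nat Hn)].
  apply rsum_nonneg. intros; apply A_nonneg; lia.
Qed.

Lemma rsum_row_weighted_le (w : nat -> R) : (forall i, (i < n)%nat -> 0 <= w i) ->
  rsum n (fun i => rsum n (fun j => A i j * w i)) <= gamma * rsum n w.
Proof.
  intros Hw. rewrite <- rsum_scal. apply rsum_le. intros i Hi.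
  rewrite (rsum_ext n _ (fun j => w i * A i j)) by (intros; ring).
  rewrite rsum_scal, (Rmult_comm gamma). apply Rmult_le_compat_l; [auto | exact (A_row i Hi)].
Qed.

Lemma rsum_col_weighted_le (w : nat -> R) : (forall j, (j < n)%nat -> 0 <= w j) ->
  rsum n (fun i => rsum n (fun j => A i j * w j)) <= gamma * rsum n w.
Proof.
  intros Hw. rewrite rsum_swap.
  rewrite (rsum_ext n _ (fun j => rsum n (fun i => A j i * w j))).
  - apply rsum_row_weighted_le; auto.
  - intros j Hj. apply rsum_ext. intros i Hi. rewrite A_sym; auto.
Qed.

Lemma heavy_coupling_le u : (u < n * n)%nat ->
  rsum (n * n) (fun t => heavy t * coupling t u) <= 4 * gamma ^ 2 / tau.
Proof.
  intros Hu. destruct (pair_lt n u Hu) as [Hp Hq].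
  set (p := pfst n u) in *. set (q := psnd n u) in *.
  assert (Hg : 0 <= gamma) by (apply gamma_nonneg; lia).
  apply Rle_trans with (/ tau * rsum (n * n) (fun t => A (pfst n t) (psnd n t) * coupling t u)).
  - rewrite <- rsum_scal. apply rsum_le. intros t Ht.
    pose proof (coupling_nonneg t u Ht Hu). unfold heavy.
    destruct (pair_lt n t Ht). pose proof (A_nonneg (pfst n t) (psnd n t) ltac:(auto) ltac:(auto)).
    assert (0 < / tau) by (apply Rinv_0_lt_compat; lra).
    destruct (Rle_dec _ _) as [Hh|Hh].
    + assert (1 <= / tau * A (pfst n t) (psnd n t)).
      { rewrite <- (Rinv_l tau) by lra. apply Rmult_le_compat_l; lra. }
      nra.
    + rewrite Rmult_0_l. apply Rmult_le_pos; [lra | apply Rmult_le_pos; lra].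
  - change (fun t => A (pfst n t) (psnd n t) * coupling t u) with
      (fun t => (fun i j => A i j * (A i q + A j q + (A p j + A q j))) (pfst n t) (psnd n t)).
    rewrite rsum_pairs.
    (* each of the four terms is a weighted row or column sum of A, hence at most gamma^2 *)
    assert (Hcol : rsum n (fun i => A i q) <= gamma).
    { rewrite (rsum_ext n _ (fun i => A q i)) by (intros; apply A_sym; auto). auto. }
    assert (H1 := rsum_row_weighted_le (fun i => A i q) ltac:(intros; apply A_nonneg; auto)).
    assert (H2 := rsum_col_weighted_le (fun j => A j q) ltac:(intros; apply A_nonneg; auto)).
    assert (H3 := rsum_col_weighted_le (fun j => A p j) ltac:(intros; apply A_nonneg; auto)).
    assert (H4 := rsum_col_weighted_le (fun j => A q j) ltac:(intros; apply A_nonneg; auto)).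
    pose proof (A_row p Hp). pose proof (A_row q Hq).
    rewrite (rsum_ext n _ (fun i => rsum n (fun j => A i j * A i q) + rsum n (fun j => A i j * A j q)
       + rsum n (fun j => A i j * A p j) + rsum n (fun j => A i j * A q j))).
    + rewrite !rsum_plus. cbv beta in H1, H2, H3, H4.
      unfold Rdiv. rewrite (Rmult_comm (4 * gamma ^ 2)).
      apply Rmult_le_compat_l; [left; apply Rinv_0_lt_compat; lra|]. simpl. nra.
    + intros i Hi. rewrite <- !rsum_plus. apply rsum_ext; intros; ring.
Qed.

Definition energy (b : nat -> R) : R :=
  rsum (n * n) (fun k => rsum (n * n) (fun u =>
    if Nat.eq_dec k u then 0 else b k * b u * link k u)).

Lemma interference_ext b b' t :
  (forall u, u <> t -> b u = b' u) -> interference b t = interference b' t.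
Proof.
  intros H. apply rsum_ext. intros u _.
  destruct (Nat.eq_dec u t); [reflexivity | rewrite H; auto].
Qed.

Lemma energy_incr_at b0 b1 t :
  (t < n * n)%nat -> b0 t = 0 -> b1 t = 1 -> (forall u, u <> t -> b1 u = b0 u) ->
  energy b1 = energy b0 + interference b0 t.
Proof.
  intros Ht H0 H1 Hu. unfold energy.
  (* the new terms are those of the row and of the column of [t] *)
  set (row := fun k u => if Nat.eq_dec k t then (if Nat.eq_dec u t then 0 else b0 u * link t u) else 0).
  set (col := fun k u => if Nat.eq_dec u t then (if Nat.eq_dec k t then 0 else b0 k * link k t) else 0).
  rewrite (rsum_ext _ _ (fun k => rsum (n * n) (fun u =>
     (if Nat.eq_dec k u then 0 else b0 k * b0 u * link k u) + row k u + col k u))).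
  2:{ intros k _; apply rsum_ext; intros u _. unfold row, col.
      destruct (Nat.eq_dec k u), (Nat.eq_dec k t), (Nat.eq_dec u t); subst; try congruence.
      all: rewrite ?H0, ?H1, ?Hu by congruence; ring. }
  rewrite (rsum_ext _ _ (fun k => rsum (n * n) (fun u =>
     if Nat.eq_dec k u then 0 else b0 k * b0 u * link k u) + rsum (n * n) (row k) + rsum (n * n) (col k)))
    by (intros; rewrite <- !rsum_plus; reflexivity).
  rewrite !rsum_plus, Rplus_assoc. f_equal.
  rewrite (rsum_swap _ _ col), (rsum_single (n * n) (fun k => rsum _ (row k)) t Ht),
    (rsum_single (n * n) (fun u => rsum _ (fun k => col k u)) t Ht).
  - unfold interference, coupling, row, col. rewrite <- rsum_plus. apply rsum_ext. intros u _.
    destruct (Nat.eq_dec t t); [|congruence]. destruct (Nat.eq_dec u t); ring.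
  - intros u _ Hne. apply rsum_zero. intros k _. unfold col.
    destruct (Nat.eq_dec u t); [congruence | reflexivity].
  - intros k _ Hne. apply rsum_zero. intros u _. unfold row.
    destruct (Nat.eq_dec k t); [congruence | reflexivity].
Qed.

(* A configuration [y] of [configs (n * n)] encodes the set of pairs [t] with [spin y t = 1];
   [select y] is the indicator of its heavy part. *)
Definition select (y : list R) (t : nat) : R :=
  if Rle_dec tau (A (pfst n t) (psnd n t)) then
    (if Req_dec_T (spin y t) 1 then 1 else 0)
  else 0.

Definition select_gain (y : list R) : R :=
  rsum (n * n) (select y) - 4 / tau * energy (select y).

Lemma select_flip_gain y t :
  In y (configs (n * n)) -> (t < n * n)%nat -> tau <= A (pfst n t) (psnd n t) ->
  select y t = 0 ->
  select_gain (flip t y) = select_gain y + 1 - 4 / tau * interference (select y) t.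
Proof.
  intros Hy Ht Hh H0.
  assert (Hoff : forall u, u <> t -> select (flip t y) u = select y u).
  { intros u Hne. unfold select. rewrite spin_flip. destruct (Nat.eq_dec u t); congruence. }
  assert (H1 : select (flip t y) t = 1).
  { revert H0. unfold select. rewrite spin_flip.
    destruct (Nat.eq_dec t t); [|congruence]. destruct (Rle_dec _ _); [|contradiction].
    destruct (spin_configs _ y t Hy Ht) as [-> | ->];
      repeat destruct (Req_dec_T _ _); intros; lra. }
  unfold select_gain.
  rewrite (energy_incr_at (select y) (select (flip t y)) t),
    (rsum_incr_at _ (select y) (select (flip t y)) t); auto.
  ring.
Qed.

(* By [select_flip_gain], adding a heavy pair [t] changes the gain by [1 - 4/tau * interference],
   so a maximiser of [select_gain] satisfies both separation inequalities below. *)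
Lemma exists_maximal_selection : exists b : nat -> R,
  (forall t, b t = 0 \/ b t = 1) /\
  (forall t, (t < n * n)%nat -> b t = 1 -> tau <= A (pfst n t) (psnd n t)) /\
  (forall t, (t < n * n)%nat -> b t = 1 -> interference b t <= tau / 4) /\
  (forall t, (t < n * n)%nat -> tau <= A (pfst n t) (psnd n t) -> b t = 0 ->
     tau / 4 <= interference b t).
Proof.
  destruct (configs_nonempty (n * n)) as [y0 Hy0].
  destruct (list_argmax (configs (n * n)) select_gain y0 Hy0) as [y [Hy Hmax]].
  assert (Hscale : forall s, s = tau / 4 * (4 / tau * s)) by (intros; field; lra).
  assert (0 < 4 / tau) by (apply Rdiv_lt_0_compat; lra).
  exists (select y). split; [|split; [|split]].
  - intros t. unfold select. destruct (Rle_dec _ _); [destruct (Req_dec_T _ _)|]; auto.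
  - intros t _. unfold select. destruct (Rle_dec _ _); [auto | intros; lra].
  - intros t Ht Hsel.
    assert (Hh : tau <= A (pfst n t) (psnd n t)).
    { revert Hsel. unfold select. destruct (Rle_dec _ _); [auto | intros; lra]. }
    set (y' := flip t y).
    assert (Hy' : In y' (configs (n * n))) by (apply flip_configs, Hy).
    assert (H0 : select y' t = 0).
    { revert Hsel. unfold select, y'. rewrite spin_flip. destruct (Nat.eq_dec t t); [|congruence].
      destruct (Rle_dec _ _); [|lra].
      destruct (spin_configs _ y t Hy Ht) as [-> | ->]; repeat destruct (Req_dec_T _ _); intros; lra. }
    pose proof (select_flip_gain y' t Hy' Ht Hh H0) as Hgain.
    unfold y' in Hgain. rewrite flip_involutive in Hgain.
    pose proof (Hmax _ Hy').
    rewrite (interference_ext (select y) (select y')).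
    + fold y' in Hgain. rewrite (Hscale (interference _ _)). nra.
    + intros u Hne. unfold select, y'. rewrite spin_flip. destruct (Nat.eq_dec u t); congruence.
  - intros t Ht Hh Hsel.
    pose proof (select_flip_gain y t Hy Ht Hh Hsel).
    pose proof (Hmax _ (flip_configs _ t y Hy)).
    rewrite (Hscale (interference _ _)). nra.
Qed.

Lemma heavy_count_le (b : nat -> R) :
  (forall t, b t = 0 \/ b t = 1) ->
  (forall t, (t < n * n)%nat -> b t = 1 -> tau <= A (pfst n t) (psnd n t)) ->
  (forall t, (t < n * n)%nat -> tau <= A (pfst n t) (psnd n t) -> b t = 0 ->
     tau / 4 <= interference b t) ->
  rsum (n * n) heavy <= (1 + 16 * gamma ^ 2 / tau ^ 2) * rsum (n * n) b.
Proof.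
  intros Hb01 Hbheavy Hmax.
  set (S t := rsum (n * n) (fun u => b u * coupling t u)).
  assert (HbS : forall t u, (t < n * n)%nat -> (u < n * n)%nat -> 0 <= b u * coupling t u).
  { intros t u Ht Hu. pose proof (coupling_nonneg t u Ht Hu).
    destruct (Hb01 u) as [-> | ->]; lra. }
  assert (Hstep : forall t, (t < n * n)%nat -> heavy t <= b t + 4 / tau * (heavy t * S t)).
  { intros t Ht. assert (0 < 4 / tau) by (apply Rdiv_lt_0_compat; lra).
    assert (HS0 : 0 <= S t) by (apply rsum_nonneg; auto).
    unfold heavy. destruct (Rle_dec _ _) as [Hh|Hh]; destruct (Hb01 t) as [Hbt|Hbt]; rewrite Hbt.
    - assert (tau / 4 <= S t).
      { eapply Rle_trans; [apply (Hmax t Ht Hh Hbt)|]. apply rsum_le. intros u Hu.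
        destruct (Nat.eq_dec u t); [apply HbS; auto | lra]. }
      assert (4 / tau * (tau / 4) = 1) by (field; lra). nra.
    - nra.
    - lra.
    - exfalso. apply Hh, Hbheavy; auto. }
  eapply Rle_trans; [apply rsum_le; exact Hstep|].
  rewrite rsum_plus, rsum_scal.
  assert (Hswap : rsum (n * n) (fun t => heavy t * S t) =
                  rsum (n * n) (fun u => b u * rsum (n * n) (fun t => heavy t * coupling t u))).
  { unfold S. rewrite (rsum_ext _ _ (fun t => rsum (n * n) (fun u => heavy t * (b u * coupling t u))))
      by (intros; rewrite rsum_scal; reflexivity).
    rewrite rsum_swap. apply rsum_ext. intros u _. rewrite <- rsum_scal. apply rsum_ext; intros; ring. }
  assert (Hbound : rsum (n * n) (fun u => b u * rsum (n * n) (fun t => heavy t * coupling t u))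
                   <= 4 * gamma ^ 2 / tau * rsum (n * n) b).
  { rewrite <- rsum_scal. apply rsum_le. intros u Hu.
    pose proof (heavy_coupling_le u Hu). destruct (Hb01 u) as [-> | ->]; lra. }
  assert (0 < 4 / tau) by (apply Rdiv_lt_0_compat; lra).
  rewrite Hswap.
  replace ((1 + 16 * gamma ^ 2 / tau ^ 2) * rsum (n * n) b) with
    (rsum (n * n) b + 4 / tau * (4 * gamma ^ 2 / tau * rsum (n * n) b)) by (field; lra).
  apply Rplus_le_compat_l, Rmult_le_compat_l; lra.
Qed.

End HeavyPairs.

Lemma m_i_flip n A x p i : (p < n)%nat ->
  m_i n A (flip p x) i = m_i n A x i - 2 * A i p * spin x p.
Proof. intros Hp. unfold m_i. apply rsum_mul_spin_flip, Hp. Qed.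

Section SeparatedSelection.

Variables (n : nat) (A : nat -> nat -> R) (tau : R) (b : nat -> R).
Hypothesis tau_pos : 0 < tau.
Hypothesis A_sym : forall i j, (i < n)%nat -> (j < n)%nat -> A i j = A j i.
Hypothesis A_nonneg : forall i j, (i < n)%nat -> (j < n)%nat -> 0 <= A i j.
Hypothesis A_diag : forall i, (i < n)%nat -> A i i = 0.
Hypothesis b01 : forall t, b t = 0 \/ b t = 1.
Hypothesis b_heavy : forall t, (t < n * n)%nat -> b t = 1 -> tau <= A (pfst n t) (psnd n t).
Hypothesis b_separated : forall t, (t < n * n)%nat -> b t = 1 -> interference n A b t <= tau / 4.

Lemma selected_link_le t u :
  (t < n * n)%nat -> (u < n * n)%nat -> b t = 1 -> b u = 1 -> u <> t ->
  link n A t u <= tau / 4 /\ link n A u t <= tau / 4.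
Proof.
  intros Ht Hu Hbt Hbu Hne.
  assert (Hterm : b u * coupling n A t u <= interference n A b t).
  { unfold interference.
    pose proof (rsum_term_le (n * n)
      (fun u0 => if Nat.eq_dec u0 t then 0 else b u0 * coupling n A t u0) u) as Hle.
    cbv beta in Hle. destruct (Nat.eq_dec u t); [congruence|]. apply Hle; auto.
    intros k Hk. destruct (Nat.eq_dec k t); [lra|].
    pose proof (coupling_nonneg n A A_nonneg t k Ht Hk). destruct (b01 k) as [-> | ->]; lra. }
  pose proof (b_separated t Ht Hbt).
  pose proof (link_nonneg n A A_nonneg t u Ht Hu). pose proof (link_nonneg n A A_nonneg u t Hu Ht).
  rewrite Hbu in Hterm. unfold coupling in Hterm. lra.
Qed.

Lemma selected_offdiag t : (t < n * n)%nat -> b t = 1 -> pfst n t <> psnd n t.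
Proof.
  intros Ht Hbt E. pose proof (b_heavy t Ht Hbt).
  destruct (pair_lt n t Ht). rewrite E, A_diag in H by auto. lra.
Qed.

Lemma selected_disjoint t u :
  (t < n * n)%nat -> (u < n * n)%nat -> b t = 1 -> b u = 1 -> u <> t ->
  pfst n t <> pfst n u /\ pfst n t <> psnd n u /\ psnd n t <> pfst n u /\ psnd n t <> psnd n u.
Proof.
  intros Ht Hu Hbt Hbu Hne.
  destruct (selected_link_le t u Ht Hu Hbt Hbu Hne) as [Htu Hut]. unfold link in Htu, Hut.
  destruct (pair_lt n t Ht) as [T1 T2], (pair_lt n u Hu) as [U1 U2].
  pose proof (b_heavy t Ht Hbt). pose proof (b_heavy u Hu Hbu).
  pose proof (A_nonneg (pfst n t) (psnd n u) T1 U2). pose proof (A_nonneg (psnd n t) (psnd n u) T2 U2).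
  pose proof (A_nonneg (pfst n u) (psnd n t) U1 T2). pose proof (A_nonneg (psnd n u) (psnd n t) U2 T2).
  split; [|split; [|split]]; intros E.
  - assert (A (pfst n t) (psnd n u) = A (pfst n u) (psnd n u)) by (rewrite E; reflexivity). lra.
  - assert (A (psnd n t) (psnd n u) = A (pfst n t) (psnd n t)) by (rewrite <- E; apply A_sym; auto). lra.
  - assert (A (psnd n u) (psnd n t) = A (pfst n u) (psnd n u)) by (rewrite E; apply A_sym; auto). lra.
  - assert (A (pfst n t) (psnd n u) = A (pfst n t) (psnd n t)) by (rewrite E; reflexivity). lra.
Qed.

Lemma endpoint_multiplicity_le1 v :
  rsum (n * n) (fun t => b t * (kron v (pfst n t) + kron v (psnd n t))) <= 1.
Proof.
  set (g t := b t * (kron v (pfst n t) + kron v (psnd n t))).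
  destruct (classic (exists t0, (t0 < n * n)%nat /\ g t0 <> 0)) as [[t0 [Ht0 Hg0]]|Hnone].
  - assert (Hb0 : b t0 = 1)
      by (destruct (b01 t0) as [E|E]; auto; unfold g in Hg0; rewrite E in Hg0; lra).
    rewrite (rsum_single _ g t0 Ht0).
    + pose proof (selected_offdiag t0 Ht0 Hb0). unfold g, kron. rewrite Hb0.
      destruct (Nat.eq_dec v (pfst n t0)), (Nat.eq_dec v (psnd n t0)); subst; try congruence; lra.
    + intros t Ht Hne. unfold g. destruct (b01 t) as [E|E]; rewrite E; [ring|].
      destruct (selected_disjoint t t0 Ht Ht0 E Hb0 (not_eq_sym Hne)) as [D1 [D2 [D3 D4]]].
      unfold g, kron in Hg0 |- *.
      destruct (Nat.eq_dec v (pfst n t0)), (Nat.eq_dec v (psnd n t0)),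
        (Nat.eq_dec v (pfst n t)), (Nat.eq_dec v (psnd n t)); subst; try congruence; lra.
  - rewrite rsum_zero; [lra|]. intros t Ht.
    destruct (Req_dec_T (g t) 0); auto. exfalso; eauto.
Qed.

Lemma rsum_endpoints_le (f : nat -> R) : (forall v, (v < n)%nat -> 0 <= f v) ->
  rsum (n * n) (fun t => b t * (f (pfst n t) + f (psnd n t))) <= rsum n f.
Proof.
  intros Hf.
  rewrite (rsum_ext _ _ (fun t => rsum n (fun v => b t * (kron v (pfst n t) + kron v (psnd n t)) * f v))).
  2:{ intros t Ht. destruct (pair_lt n t Ht).
      rewrite (rsum_ext n _ (fun v => b t * (kron v (pfst n t) * f v + kron v (psnd n t) * f v)))
        by (intros; ring).
      rewrite rsum_scal, rsum_plus, !rsum_kron; auto. }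
  rewrite rsum_swap. apply rsum_le. intros v Hv.
  rewrite (rsum_ext _ _ (fun t => f v * (b t * (kron v (pfst n t) + kron v (psnd n t))))) by (intros; ring).
  rewrite rsum_scal. pose proof (endpoint_multiplicity_le1 v). pose proof (Hf v Hv). nra.
Qed.

(* [gap t x] is [m_i - m_j] at the endpoints [(i, j)] of [t], minus the contribution of the
   second endpoints of the other selected pairs: flipping one of those spins leaves it unchanged. *)
Definition residual (t : nat) (x : list R) : R :=
  rsum (n * n) (fun u => if Nat.eq_dec u t then 0 else
    b u * ((A (pfst n t) (psnd n u) - A (psnd n t) (psnd n u)) * spin x (psnd n u))).

Definition gap (t : nat) (x : list R) : R :=
  m_i n A x (pfst n t) - m_i n A x (psnd n t) - residual t x.

Definition good (t : nat) (x : list R) : R := if Rle_dec tau (Rabs (gap t x)) then 1 else 0.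

Definition good_count (x : list R) : R := rsum (n * n) (fun t => b t * good t x).

Lemma good01 t x : good t x = 0 \/ good t x = 1.
Proof. unfold good. destruct (Rle_dec _ _); auto. Qed.

Lemma Rabs_residual_le t x :
  (t < n * n)%nat -> b t = 1 -> In x (configs n) -> Rabs (residual t x) <= tau / 4.
Proof.
  intros Ht Hbt Hx. eapply Rle_trans; [apply Rabs_rsum_le|].
  eapply Rle_trans; [|apply (b_separated t Ht Hbt)]. apply rsum_le. intros u Hu.
  destruct (Nat.eq_dec u t); [rewrite Rabs_R0; lra|].
  destruct (b01 u) as [-> | ->]; [rewrite !Rmult_0_l, Rabs_R0; lra|].
  destruct (pair_lt n t Ht), (pair_lt n u Hu).
  pose proof (A_nonneg (pfst n t) (psnd n u) ltac:(auto) ltac:(auto)).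
  pose proof (A_nonneg (psnd n t) (psnd n u) ltac:(auto) ltac:(auto)).
  pose proof (link_nonneg n A A_nonneg u t Hu Ht).
  pose proof (Rabs_spin_le1 n x (psnd n u) Hx). pose proof (Rabs_pos (spin x (psnd n u))).
  assert (Rabs (A (pfst n t) (psnd n u) - A (psnd n t) (psnd n u)) <= link n A t u)
    by (unfold link; apply Rabs_le; lra).
  rewrite !Rmult_1_l, Rabs_mult. unfold coupling.
  pose proof (Rabs_pos (A (pfst n t) (psnd n u) - A (psnd n t) (psnd n u))). nra.
Qed.

Lemma m_var_ge_good_count x :
  In x (configs n) -> 9 * tau ^ 2 / 32 * good_count x <= m_var n A x.
Proof.
  intros Hx. unfold m_var.
  eapply Rle_trans; [|apply (rsum_endpoints_le (fun v => (m_i n A x v - m_bar n A x) ^ 2))].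
  2:{ intros; apply pow2_ge_0. }
  unfold good_count. rewrite <- rsum_scal. apply rsum_le. intros t Ht.
  set (a := m_i n A x (pfst n t)). set (c := m_i n A x (psnd n t)). set (mb := m_bar n A x).
  assert (Hsq : (a - mb) ^ 2 + (c - mb) ^ 2 = ((a - c) ^ 2 + (a + c - 2 * mb) ^ 2) / 2) by field.
  pose proof (pow2_ge_0 (a + c - 2 * mb)).
  pose proof (pow2_ge_0 (a - mb)). pose proof (pow2_ge_0 (c - mb)).
  destruct (b01 t) as [Hbt|Hbt]; rewrite Hbt; [lra|].
  unfold good. destruct (Rle_dec _ _) as [G|G]; [|lra].
  pose proof (Rabs_residual_le t x Ht Hbt Hx). unfold gap in G. fold a c in G.
  assert (HD : 3 * tau / 4 <= Rabs (a - c)).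
  { pose proof (Rabs_triang (a - c) (- residual t x)) as Htri.
    replace (a - c + - residual t x) with (a - c - residual t x) in Htri by ring.
    pose proof (Rabs_Ropp (residual t x)). lra. }
  assert (9 * tau ^ 2 / 16 <= (a - c) ^ 2).
  { destruct (Rle_dec 0 (a - c));
      [rewrite Rabs_right in HD by lra | rewrite Rabs_left in HD by lra]; nra. }
  lra.
Qed.

Lemma residual_flip_self k x : (k < n * n)%nat -> b k = 1 ->
  residual k (flip (psnd n k) x) = residual k x.
Proof.
  intros Hk Hbk. apply rsum_ext. intros u Hu. destruct (Nat.eq_dec u k) as [|Hne]; [reflexivity|].
  destruct (b01 u) as [-> | Hbu]; [ring|].
  destruct (selected_disjoint u k Hu Hk Hbu Hbk (not_eq_sym Hne)) as [_ [_ [_ D]]].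
  rewrite spin_flip. destruct (Nat.eq_dec (psnd n u) (psnd n k)); [contradiction | reflexivity].
Qed.

Lemma residual_flip_other k t x :
  (k < n * n)%nat -> b k = 1 -> (t < n * n)%nat -> b t = 1 -> t <> k ->
  residual t (flip (psnd n k) x) =
  residual t x - 2 * (A (pfst n t) (psnd n k) - A (psnd n t) (psnd n k)) * spin x (psnd n k).
Proof.
  intros Hk Hbk Ht Hbt Hne. unfold residual.
  rewrite (rsum_ext _ _ (fun u =>
    (if Nat.eq_dec u t then 0 else
       b u * ((A (pfst n t) (psnd n u) - A (psnd n t) (psnd n u)) * spin x (psnd n u)))
    + kron u k * (- 2 * (A (pfst n t) (psnd n k) - A (psnd n t) (psnd n k)) * spin x (psnd n k)))).
  - rewrite rsum_plus, (rsum_kron _ (fun _ => _) k Hk). ring.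
  - intros u Hu. unfold kron. rewrite spin_flip.
    destruct (Nat.eq_dec u t) as [Hut|Hut], (Nat.eq_dec u k) as [Huk|Huk]; subst; try congruence.
    + ring.
    + rewrite Hbk. destruct (Nat.eq_dec (psnd n k) (psnd n k)); [ring | congruence].
    + destruct (b01 u) as [-> | Hbu]; [ring|].
      destruct (selected_disjoint u k Hu Hk Hbu Hbk (not_eq_sym Huk)) as [_ [_ [_ D]]].
      destruct (Nat.eq_dec (psnd n u) (psnd n k)); [contradiction | ring].
Qed.

Lemma gap_flip_self k x : (k < n * n)%nat -> b k = 1 ->
  gap k (flip (psnd n k) x) = gap k x - 2 * A (pfst n k) (psnd n k) * spin x (psnd n k).
Proof.
  intros Hk Hbk. destruct (pair_lt n k Hk). unfold gap.
  rewrite residual_flip_self, !m_i_flip, A_diag by auto. ring.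
Qed.

Lemma gap_flip_other k t x :
  (k < n * n)%nat -> b k = 1 -> (t < n * n)%nat -> b t = 1 -> t <> k ->
  gap t (flip (psnd n k) x) = gap t x.
Proof.
  intros Hk Hbk Ht Hbt Hne. destruct (pair_lt n k Hk). unfold gap.
  rewrite (residual_flip_other k t x), !m_i_flip by auto. ring.
Qed.

Lemma good_flip_self k x : (k < n * n)%nat -> b k = 1 -> In x (configs n) ->
  good k x = 0 -> good k (flip (psnd n k) x) = 1.
Proof.
  intros Hk Hbk Hx. unfold good. rewrite gap_flip_self by auto.
  destruct (Rle_dec tau (Rabs (gap k x))) as [|G]; [lra|]. intros _.
  (* [|gap| < tau] and the flip shifts the gap by [2 A_ij >= 2 tau] *)
  pose proof (b_heavy k Hk Hbk). destruct (pair_lt n k Hk).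
  destruct (Rle_dec _ _) as [|G2]; [reflexivity|]. exfalso. apply G2. apply Rnot_le_lt in G.
  set (P := gap k x) in *. set (a := A (pfst n k) (psnd n k)) in *.
  destruct (spin_configs n x (psnd n k) Hx ltac:(auto)) as [-> | ->];
    apply Rabs_def2 in G as [G1 G2']; [rewrite Rabs_left | rewrite Rabs_right]; lra.
Qed.

Lemma good_count_flip k x : (k < n * n)%nat -> b k = 1 -> In x (configs n) ->
  good k x = 0 -> good_count (flip (psnd n k) x) = good_count x + 1.
Proof.
  intros Hk Hbk Hx Hg. unfold good_count. apply (rsum_incr_at _ _ _ k Hk).
  - rewrite Hg; ring.
  - rewrite Hbk, good_flip_self; auto; ring.
  - intros u Hu Hne. destruct (b01 u) as [-> | Hbu]; [ring|].
    unfold good. rewrite gap_flip_other; auto.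
Qed.

End SeparatedSelection.

Lemma exp_le_compat a c : a <= c -> exp a <= exp c.
Proof.
  intros Hac. destruct (Rle_lt_or_eq_dec a c Hac) as [Hlt | ->]; [left; apply exp_increasing, Hlt | lra].
Qed.

Lemma magn_flip n x p : (p < n)%nat -> magn n (flip p x) = magn n x - 2 * spin x p.
Proof.
  intros Hp. unfold magn.
  rewrite (rsum_ext n (spin (flip p x)) (fun q => 1 * spin (flip p x) q)) by (intros; ring).
  rewrite rsum_mul_spin_flip by exact Hp.
  rewrite (rsum_ext n (fun q => 1 * spin x q) (spin x)) by (intros; ring). ring.
Qed.

Lemma Rabs_magn_le n x : In x (configs n) -> Rabs (magn n x) <= INR n.
Proof.
  intros Hx. unfold magn. eapply Rle_trans; [apply Rabs_rsum_le|].
  rewrite <- (Rmult_1_r (INR n)), <- rsum_const. apply rsum_le. intros k _.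
  exact (Rabs_spin_le1 n x k Hx).
Qed.

Lemma cw_weight_flip_le n beta B x p :
  (1 <= n)%nat -> 0 <= beta -> In x (configs n) -> (p < n)%nat ->
  cw_weight n beta B x <= exp (2 * beta + 2 * Rabs B) * cw_weight n beta B (flip p x).
Proof.
  intros Hn Hbeta Hx Hp. unfold cw_weight. rewrite <- exp_plus. apply exp_le_compat.
  rewrite magn_flip by exact Hp.
  assert (HnR : 1 <= INR n) by (apply (le_INR 1); exact Hn).
  assert (Hc : 0 <= beta / (2 * INR n))
    by (unfold Rdiv; apply Rmult_le_pos; [lra | left; apply Rinv_0_lt_compat; lra]).
  assert (Hcn : beta / (2 * INR n) * INR n = beta / 2) by (field; lra).
  pose proof (Rabs_magn_le n x Hx) as HM. set (M := magn n x) in *.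
  pose proof (Rle_abs M). pose proof (Rle_abs (- M)). pose proof (Rabs_Ropp M).
  pose proof (Rle_abs B). pose proof (Rle_abs (- B)). pose proof (Rabs_Ropp B).
  destruct (spin_configs n x p Hx Hp) as [-> | ->]; nra.
Qed.

Section LevelSets.

Variables (n M : nat) (w : list R -> R) (K : R) (b : nat -> R) (site : nat -> nat)
  (g : nat -> list R -> R).
Hypothesis w_pos : forall x, 0 < w x.
Hypothesis K_pos : 0 < K.
Hypothesis b01 : forall u, b u = 0 \/ b u = 1.
Hypothesis g01 : forall u x, g u x = 0 \/ g u x = 1.

Definition level (x : list R) : R := rsum M (fun u => b u * g u x).

Hypothesis w_flip : forall u x, (u < M)%nat -> b u = 1 -> In x (configs n) ->
  w x <= K * w (flip (site u) x).
Hypothesis flip_raises_level : forall u x, (u < M)%nat -> b u = 1 -> In x (configs n) ->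
  g u x = 0 -> g u (flip (site u) x) = 1 /\ level (flip (site u) x) = level x + 1.

Definition below (k : R) (x : list R) : R := if Rle_dec (level x) k then 1 else 0.

Definition mass_below (k : R) : R := lsum (configs n) (fun x => below k x * w x).

Lemma below_mul_nonneg k x c : 0 <= c -> 0 <= below k x * c.
Proof. intros Hc. unfold below. destruct (Rle_dec _ _); lra. Qed.

Lemma mass_below_nonneg k : 0 <= mass_below k.
Proof. apply lsum_nonneg. intros x _. apply below_mul_nonneg, Rlt_le, w_pos. Qed.

Lemma mass_below_le_total k : mass_below k <= lsum (configs n) w.
Proof.
  apply lsum_le. intros x _. pose proof (w_pos x). unfold below.
  destruct (Rle_dec _ _); lra.
Qed.

Lemma mass_below_flip_le u k : (u < M)%nat -> b u = 1 ->
  lsum (configs n) (fun x => below k x * w x * (1 - g u x)) <=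
  K * lsum (configs n) (fun y => below (k + 1) y * w y * g u y).
Proof.
  intros Hu Hbu. rewrite <- lsum_scal.
  rewrite <- (lsum_configs_flip n (site u) (fun y => K * (below (k + 1) y * w y * g u y))).
  apply lsum_le. intros x Hx.
  assert (0 <= K * (below (k + 1) (flip (site u) x) * w (flip (site u) x) * g u (flip (site u) x))).
  { apply Rmult_le_pos; [lra|]. rewrite Rmult_assoc. apply below_mul_nonneg.
    pose proof (w_pos (flip (site u) x)). destruct (g01 u (flip (site u) x)) as [-> | ->]; lra. }
  destruct (g01 u x) as [Hg | Hg]; rewrite Hg; [|lra].
  destruct (flip_raises_level u x Hu Hbu Hx Hg) as [Hg' Hlev].
  unfold below in *. rewrite Hg', Hlev in *.
  destruct (Rle_dec (level x) k); [|lra].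
  destruct (Rle_dec (level x + 1) (k + 1)); [|lra].
  pose proof (w_flip u x Hu Hbu Hx). lra.
Qed.

(* Double counting: a configuration of level at most [k] has at least [rsum M b - k] repairable
   [u], each repair lands in level at most [k + 1], and a configuration there is the image of at
   most [k + 1] repairs. *)
Lemma mass_below_recursion k :
  mass_below k * (rsum M b - k) <= K * (k + 1) * mass_below (k + 1).
Proof.
  apply Rle_trans with
    (lsum (configs n) (fun x => rsum M (fun u => b u * (below k x * w x * (1 - g u x))))).
  { unfold mass_below. rewrite Rmult_comm, <- lsum_scal. apply lsum_le. intros x _.
    rewrite (rsum_ext M (fun u => b u * (below k x * w x * (1 - g u x)))
               (fun u => below k x * w x * (b u - b u * g u x))) by (intros; ring).
    rewrite rsum_scal, rsum_minus. fold (level x).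
    pose proof (w_pos x). unfold below. destruct (Rle_dec (level x) k); nra. }
  rewrite lsum_rsum_swap.
  apply Rle_trans with
    (rsum M (fun u => b u * (K * lsum (configs n) (fun y => below (k + 1) y * w y * g u y)))).
  { apply rsum_le. intros u Hu.
    destruct (b01 u) as [-> | Hbu].
    - rewrite (lsum_ext _ _ (fun _ => 0 * 1)) by (intros; ring).
      rewrite lsum_scal. lra.
    - rewrite Hbu, Rmult_1_l, (lsum_ext _ _ (fun x => below k x * w x * (1 - g u x))) by (intros; ring).
      apply mass_below_flip_le; auto. }
  rewrite (rsum_ext M _ (fun u => K * lsum (configs n) (fun y => below (k + 1) y * w y * (b u * g u y))))
    by (intros; rewrite <- !lsum_scal; apply lsum_ext; intros; ring).
  rewrite rsum_scal, <- lsum_rsum_swap, Rmult_assoc. apply Rmult_le_compat_l; [lra|].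
  unfold mass_below. rewrite <- lsum_scal. apply lsum_le. intros y _.
  rewrite rsum_scal. fold (level y). pose proof (w_pos y).
  unfold below. destruct (Rle_dec (level y) (k + 1)); nra.
Qed.

Lemma mass_below_halve k : 0 <= k -> (k + 1) * (2 * K + 1) <= rsum M b ->
  mass_below k <= / 2 * mass_below (k + 1).
Proof.
  intros Hk HL. pose proof (mass_below_recursion k).
  pose proof (mass_below_nonneg k). pose proof (mass_below_nonneg (k + 1)).
  assert (2 * K * (k + 1) <= rsum M b - k) by nra.
  assert (mass_below k * (2 * K * (k + 1)) <= K * (k + 1) * mass_below (k + 1)) by nra.
  assert (0 < K * (k + 1)) by nra. nra.
Qed.

Lemma mass_below_geometric d : forall k, 0 <= k -> (k + INR d) * (2 * K + 1) <= rsum M b ->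
  mass_below k <= (/ 2) ^ d * mass_below (k + INR d).
Proof.
  induction d as [|d IH]; intros k Hk HL.
  - simpl. rewrite Rplus_0_r. lra.
  - rewrite S_INR in HL. pose proof (pos_INR d).
    pose proof (mass_below_halve k Hk ltac:(nra)) as Hhalf.
    pose proof (IH (k + 1) ltac:(lra)
      ltac:(replace (k + 1 + INR d) with (k + (INR d + 1)) by ring; exact HL)).
    rewrite S_INR. replace (k + (INR d + 1)) with (k + 1 + INR d) by ring. simpl.
    nra.
Qed.

End LevelSets.

Lemma exists_large_selection n A gamma c :
  0 < c -> 0 < gamma ->
  (forall i j, (i < n)%nat -> (j < n)%nat -> A i j = A j i) ->
  (forall i j, (i < n)%nat -> (j < n)%nat -> 0 <= A i j) ->
  (forall i, (i < n)%nat -> rsum n (fun j => A i j) <= gamma) ->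
  c * INR n <= rsum n (fun i => rsum n (fun j => A i j ^ 2)) ->
  let tau := c / (2 * gamma) in
  exists b : nat -> R,
    (forall t, b t = 0 \/ b t = 1) /\
    (forall t, (t < n * n)%nat -> b t = 1 -> tau <= A (pfst n t) (psnd n t)) /\
    (forall t, (t < n * n)%nat -> b t = 1 -> interference n A b t <= tau / 4) /\
    c / (2 * gamma ^ 2 * (1 + 16 * gamma ^ 2 / tau ^ 2)) * INR n <= rsum (n * n) b.
Proof.
  intros Hc Hg Hsym Hnonneg Hrow Hsq tau.
  assert (Htau : 0 < tau) by (apply Rdiv_lt_0_compat; lra).
  destruct (exists_maximal_selection n A tau Htau) as [b [Hb01 [Hbh [Hsep Hmax]]]].
  exists b. split; [|split; [|split]]; auto.
  pose proof (heavy_count_le n A gamma tau Htau Hsym Hnonneg Hrow b Hb01 Hbh Hmax) as Hcount.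
  pose proof (sum_sq_le_heavy n A gamma tau Htau Hnonneg Hrow) as Hheavy.
  set (lam := 1 + 16 * gamma ^ 2 / tau ^ 2) in *.
  assert (Hlam : 1 <= lam).
  { unfold lam. assert (0 <= 16 * gamma ^ 2 / tau ^ 2); [|lra].
    apply Rmult_le_pos; [nra | left; apply Rinv_0_lt_compat; nra]. }
  assert (Htg : tau * gamma = c / 2) by (unfold tau; field; lra).
  assert (Hpos : 0 < 2 * gamma ^ 2 * lam) by nra.
  apply (Rmult_le_reg_l (2 * gamma ^ 2 * lam)); [exact Hpos|].
  replace (2 * gamma ^ 2 * lam * (c / (2 * gamma ^ 2 * lam) * INR n)) with (c * INR n) by (field; lra).
  rewrite Htg in Hheavy. nra.
Qed.

Section LowVariance.

Variables (n : nat) (A : nat -> nat -> R) (tau : R) (b : nat -> R) (beta B : R).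
Hypothesis n_pos : (1 <= n)%nat.
Hypothesis beta_nonneg : 0 <= beta.
Hypothesis tau_pos : 0 < tau.
Hypothesis A_sym : forall i j, (i < n)%nat -> (j < n)%nat -> A i j = A j i.
Hypothesis A_nonneg : forall i j, (i < n)%nat -> (j < n)%nat -> 0 <= A i j.
Hypothesis A_diag : forall i, (i < n)%nat -> A i i = 0.
Hypothesis b01 : forall t, b t = 0 \/ b t = 1.
Hypothesis b_heavy : forall t, (t < n * n)%nat -> b t = 1 -> tau <= A (pfst n t) (psnd n t).
Hypothesis b_separated : forall t, (t < n * n)%nat -> b t = 1 -> interference n A b t <= tau / 4.

Lemma good_count_mass_geometric d k :
  0 <= k -> (k + INR d) * (2 * exp (2 * beta + 2 * Rabs B) + 1) <= rsum (n * n) b ->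
  mass_below n (n * n) (cw_weight n beta B) b (good n A tau b) k
    <= (/ 2) ^ d * lsum (configs n) (cw_weight n beta B).
Proof.
  intros Hk HL.
  assert (Hw : forall x, 0 < cw_weight n beta B x) by (intros; apply exp_pos).
  assert (Hwflip : forall u x, (u < n * n)%nat -> b u = 1 -> In x (configs n) ->
            cw_weight n beta B x <=
            exp (2 * beta + 2 * Rabs B) * cw_weight n beta B (flip (psnd n u) x)).
  { intros u x Hu _ Hx. apply cw_weight_flip_le; auto. apply (pair_lt n u Hu). }
  assert (Hraise : forall u x, (u < n * n)%nat -> b u = 1 -> In x (configs n) ->
            good n A tau b u x = 0 ->
            good n A tau b u (flip (psnd n u) x) = 1 /\
            level (n * n) b (good n A tau b) (flip (psnd n u) x) =
            level (n * n) b (good n A tau b) x + 1).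
  { intros u x Hu Hbu Hx Hg. split; [apply good_flip_self | apply good_count_flip]; auto. }
  eapply Rle_trans;
    [exact (mass_below_geometric n (n * n) _ _ b (psnd n) (good n A tau b) Hw (exp_pos _) b01
              (good01 n A tau b) Hwflip Hraise d k Hk HL)|].
  apply Rmult_le_compat_l; [apply pow_le; lra | apply mass_below_le_total, Hw].
Qed.

Lemma low_variance_level_le delta x :
  In x (configs n) -> m_var n A x <= INR n * delta ->
  level (n * n) b (good n A tau b) x <= INR n * delta / (9 * tau ^ 2 / 32).
Proof.
  intros Hx Hv.
  pose proof (m_var_ge_good_count n A tau b tau_pos A_sym A_nonneg A_diag b01 b_heavy b_separated
                x Hx) as Hvar.
  change (level (n * n) b (good n A tau b) x) with (good_count n A tau b x).
  assert (Hkappa : 0 < 9 * tau ^ 2 / 32) by nra.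
  apply (Rmult_le_reg_l (9 * tau ^ 2 / 32)); [exact Hkappa|].
  replace (9 * tau ^ 2 / 32 * (INR n * delta / (9 * tau ^ 2 / 32))) with (INR n * delta)
    by (field; lra).
  lra.
Qed.

Lemma cw_prob_low_variance_le_pow_half delta d :
  0 <= delta ->
  (INR n * delta / (9 * tau ^ 2 / 32) + INR d) * (2 * exp (2 * beta + 2 * Rabs B) + 1)
    <= rsum (n * n) b ->
  cw_prob n beta B (fun x => m_var n A x <= INR n * delta)
    (fun x => Rle_dec (m_var n A x) (INR n * delta)) <= (/ 2) ^ d.
Proof.
  intros Hdelta HL.
  set (w := cw_weight n beta B). set (k0 := INR n * delta / (9 * tau ^ 2 / 32)).
  assert (Hw : forall x, 0 < w x) by (intros; apply exp_pos).
  assert (Hk0 : 0 <= k0).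
  { apply Rmult_le_pos; [apply Rmult_le_pos; [apply pos_INR | lra]|].
    left; apply Rinv_0_lt_compat; nra. }
  set (num := lsum (configs n) (fun x => if Rle_dec (m_var n A x) (INR n * delta) then w x else 0)).
  assert (Hnum : num <= mass_below n (n * n) w b (good n A tau b) k0).
  { apply lsum_le. intros x Hx. unfold below. pose proof (Hw x).
    destruct (Rle_dec (m_var n A x) (INR n * delta)) as [Hv|]; destruct (Rle_dec _ k0) as [|Hlev];
      try lra.
    exfalso. exact (Hlev (low_variance_level_le delta x Hx Hv)). }
  pose proof (good_count_mass_geometric d k0 Hk0 HL) as Hgeom.
  destruct (configs_nonempty n) as [x0 Hx0].
  assert (HZ : 0 < lsum (configs n) w) by (apply (lsum_pos _ _ x0 Hx0); intros; [left|]; apply Hw).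
  unfold cw_prob. fold w. change (fold_right Rplus 0 (map w (configs n))) with (lsum (configs n) w).
  change (fold_right Rplus 0 (map _ (configs n))) with num.
  unfold Rdiv. apply (Rmult_le_reg_r (lsum (configs n) w)); [exact HZ|].
  rewrite Rmult_assoc, Rinv_l, Rmult_1_r by lra. fold w in Hgeom. lra.
Qed.

End LowVariance.

Lemma INR_div_bounds Q n : (0 < Q)%nat -> (2 * Q <= n)%nat ->
  INR n / (2 * INR Q) <= INR (n / Q) <= INR n / INR Q.
Proof.
  intros HQ Hn.
  assert (HQR : 0 < INR Q) by (apply lt_0_INR; exact HQ).
  assert (Hdiv : INR n = INR Q * INR (n / Q) + INR (n mod Q)).
  { rewrite <- mult_INR, <- plus_INR. f_equal. apply Nat.div_mod. lia. }
  assert (Hmod : INR (n mod Q) < INR Q) by (apply lt_INR, Nat.mod_upper_bound; lia).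
  pose proof (pos_INR (n mod Q)).
  assert (Hn2 : 2 * INR Q <= INR n)
    by (replace 2 with (INR 2) by reflexivity; rewrite <- mult_INR; apply le_INR, Hn).
  split; apply (Rmult_le_reg_l (2 * INR Q)); try lra;
    field_simplify; try lra.
Qed.

Lemma pow_half_le_exp Q n : (0 < Q)%nat -> (2 * Q <= n)%nat ->
  (/ 2) ^ (n / Q) <= exp (- (ln 2 / (2 * INR Q)) * INR n).
Proof.
  intros HQ Hn.
  assert (Hln2 : 0 < ln 2) by (rewrite <- ln_1; apply ln_increasing; lra).
  assert (Hpow : forall d, (/ 2) ^ d = exp (- (INR d * ln 2))).
  { induction d as [|d IH]; [simpl; rewrite Rmult_0_l, Ropp_0, exp_0; reflexivity|].
    rewrite S_INR. simpl. rewrite IH.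
    replace (- ((INR d + 1) * ln 2)) with (- ln 2 + - (INR d * ln 2)) by ring.
    rewrite exp_plus, (exp_Ropp (ln 2)), exp_ln by lra. reflexivity. }
  rewrite Hpow. apply exp_le_compat.
  destruct (INR_div_bounds Q n HQ Hn) as [Hlow _].
  assert (HQR : 0 < INR Q) by (apply lt_0_INR; exact HQ).
  replace (- (ln 2 / (2 * INR Q)) * INR n) with (- (INR n / (2 * INR Q) * ln 2)) by (field; lra).
  apply Ropp_le_contravar, Rmult_le_compat_r; lra.
Qed.

Lemma cw_prob_low_variance_uniform (c gamma b2 B : R) : 0 < c -> 0 < gamma ->
  exists (delta eps : R) (Q : nat), 0 < delta /\ 0 < eps /\ (0 < Q)%nat /\
  forall n (A : nat -> nat -> R) beta,
    (2 * Q <= n)%nat ->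
    (forall i j, (i < n)%nat -> (j < n)%nat -> A i j = A j i) ->
    (forall i j, (i < n)%nat -> (j < n)%nat -> 0 <= A i j) ->
    (forall i, (i < n)%nat -> A i i = 0) ->
    (forall i, (i < n)%nat -> rsum n (fun j => A i j) <= gamma) ->
    0 <= beta <= b2 ->
    c * INR n <= rsum n (fun i => rsum n (fun j => A i j ^ 2)) ->
    cw_prob n beta B (fun x => m_var n A x <= INR n * delta)
      (fun x => Rle_dec (m_var n A x) (INR n * delta)) <= exp (- eps * INR n).
Proof.
  intros Hc Hg.
  set (tau := c / (2 * gamma)). set (lam := 1 + 16 * gamma ^ 2 / tau ^ 2).
  set (alpha := c / (2 * gamma ^ 2 * lam)). set (E := exp (2 * b2 + 2 * Rabs B)).
  set (rho := alpha / (2 * E + 1)). set (kappa := 9 * tau ^ 2 / 32).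
  assert (Htau : 0 < tau) by (apply Rdiv_lt_0_compat; lra).
  assert (Hlam : 0 < lam).
  { unfold lam. assert (0 <= 16 * gamma ^ 2 / tau ^ 2); [|lra].
    apply Rmult_le_pos; [nra | left; apply Rinv_0_lt_compat; nra]. }
  assert (HE : 0 < E) by apply exp_pos.
  assert (Halpha : 0 < alpha).
  { apply Rdiv_lt_0_compat; [lra|]. apply Rmult_lt_0_compat; [nra | lra]. }
  assert (Hrho : 0 < rho) by (apply Rdiv_lt_0_compat; lra).
  assert (Hkappa : 0 < kappa) by (unfold kappa; nra).
  destruct (INR_archimed (rho / 2) 1 ltac:(lra)) as [Q HQ].
  assert (HQpos : (0 < Q)%nat) by (destruct Q; [simpl in HQ; lra | lia]).
  assert (HQR : 0 < INR Q) by (apply lt_0_INR; exact HQpos).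
  assert (Hln2 : 0 < ln 2) by (rewrite <- ln_1; apply ln_increasing; lra).
  exists (kappa * rho / 2), (ln 2 / (2 * INR Q)), Q.
  split; [nra | split; [apply Rdiv_lt_0_compat; lra | split; [exact HQpos|]]].
  intros n A beta Hn Hsym Hnonneg Hdiag Hrow Hbeta Hsq.
  assert (Hn1 : (1 <= n)%nat) by lia.
  destruct (exists_large_selection n A gamma c Hc Hg Hsym Hnonneg Hrow Hsq)
    as [b [Hb01 [Hbh [Hsep HL]]]].
  fold tau lam alpha in Hbh, Hsep, HL.
  eapply Rle_trans; [|apply (pow_half_le_exp Q n HQpos Hn)].
  apply (cw_prob_low_variance_le_pow_half n A tau b beta B); auto; [lra | nra |].
  (* the level [rho n / 2] and the [n / Q <= rho n / 2] halving steps fit into [alpha n] *)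
  destruct (INR_div_bounds Q n HQpos Hn) as [_ Hd].
  assert (Hnpos : 0 < INR n) by (apply lt_0_INR; lia).
  assert (HdQ : INR n / INR Q <= rho / 2 * INR n).
  { unfold Rdiv. rewrite Rmult_comm. apply Rmult_le_compat_r; [lra|].
    apply (Rmult_le_reg_l (INR Q)); [lra|]. rewrite Rinv_r by lra. lra. }
  assert (HK : exp (2 * beta + 2 * Rabs B) <= E) by (apply exp_le_compat; lra).
  fold kappa. replace (INR n * (kappa * rho / 2) / kappa) with (rho / 2 * INR n) by (field; lra).
  apply Rle_trans with (rho * INR n * (2 * E + 1)).
  - pose proof (exp_pos (2 * beta + 2 * Rabs B)). pose proof (pos_INR (n / Q)).
    assert (0 <= rho / 2 * INR n) by nra.
    apply Rmult_le_compat; lra.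
  - replace (rho * INR n * (2 * E + 1)) with (alpha * INR n) by (unfold rho; field; lra). exact HL.
Qed.

Theorem lemma4 (A : nat -> nat -> nat -> R) (beta : nat -> R)
  (Hbeta : exists b1 b2 : R, 0 < b1 /\
             forall n : nat, (1 <= n)%nat -> b1 <= beta n <= b2)
  (Hsym : forall n i j, (i < n)%nat -> (j < n)%nat -> A n i j = A n j i)
  (Hnonneg : forall n i j, (i < n)%nat -> (j < n)%nat -> 0 <= A n i j)
  (Hdiag : forall n i, (i < n)%nat -> A n i i = 0)
  (HC1 : exists gamma : R, forall n i, (i < n)%nat ->
           rsum n (fun j => A n i j) <= gamma)
  (Hliminf : exists c : R, 0 < c /\ exists N : nat, forall n : nat, (N <= n)%nat ->
           c <= / INR n * rsum n (fun i => rsum n (fun j => (A n i j) ^ 2)))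
  : forall B : R, exists delta : R, 0 < delta /\
      exists eps : R, 0 < eps /\ exists N : nat, forall n : nat, (N <= n)%nat ->
        cw_prob n (beta n) B (fun x => m_var n (A n) x <= INR n * delta)
          (fun x => Rle_dec (m_var n (A n) x) (INR n * delta))
        <= exp (- eps * INR n).
Proof.
  intros B.
  destruct Hbeta as [b1 [b2 [Hb1 Hbeta]]].
  destruct HC1 as [gamma0 Hrow].
  destruct Hliminf as [c [Hc [N0 HN0]]].
  set (gamma := Rmax gamma0 1).
  assert (Hgamma : 0 < gamma) by (apply Rlt_le_trans with 1; [lra | apply Rmax_r]).
  destruct (cw_prob_low_variance_uniform c gamma b2 B Hc Hgamma)
    as [delta [eps [Q [Hdelta [Heps [HQ Hbound]]]]]].
  exists delta; split; [exact Hdelta|]. exists eps; split; [exact Heps|].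
  exists (Nat.max N0 (2 * Q)). intros n Hn.
  assert (Hn1 : (1 <= n)%nat) by lia.
  assert (HnR : 0 < INR n) by (apply lt_0_INR; lia).
  apply Hbound; auto; [lia | | |].
  - intros i Hi. eapply Rle_trans; [apply Hrow, Hi | apply Rmax_l].
  - specialize (Hbeta n Hn1). lra.
  - specialize (HN0 n ltac:(lia)). apply (Rmult_le_compat_l (INR n)) in HN0; [|lra].
    rewrite <- Rmult_assoc, Rinv_r, Rmult_1_l in HN0 by lra. lra.
Qed.
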